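(* Let $p$ be the POP of length 4 defined by the single relation $1>2$ (labels $3,4$ isolated); equivalently, avoiding $p$ means avoiding all 12 patterns of length 4 whose first entry exceeds the second. Let $a(n)=|S_n(p)|$. Then $a(n)=n!$ for $n\in\{0,1,2,3\}$ and $a(n)=n(n-1)$ for $n\geq 4$. Moreover, $$\sum_{n\geq 0}a(n)x^n=\frac{1-2x+2x^2+2x^3-x^4}{(1-x)^3}.$$
   Context: An $n$-permutation is a word $\pi=\pi_1\cdots\pi_n$ containing each of $1,\ldots,n$ exactly once; $S_n$ is the set of $n$-permutations ($S_0$ consists of the empty permutation). A partially ordered pattern (POP) $p$ of length $k$ is a partial order on the label set $\{1,\ldots,k\}$; it is described by a set of generating relations, where a relation $x>y$ means that in an occurrence the entry in the $x$-th chosen position must be larger than the entry in the $y$-th chosen position, and labels not involved in any relation are unconstrained. An $n$-permutation $\pi$ contains $p$ if there are indices $1\leq i_1<\cdots<i_k\leq n$ such that $\pi_{i_x}>\pi_{i_y}$ whenever $x>y$ in the partial order; otherwise $\pi$ avoids $p$. $S_n(p)$ denotes the set of $n$-permutations avoiding $p$. *)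

From HB Require Import structures.
From mathcomp Require Import all_boot all_order all_algebra all_fingroup.
Set Implicit Arguments. Unset Strict Implicit. Unset Printing Implicit Defensive.

(* A POP of length k, given by its generating relations on the labels
   {0,..,k-1} (label x+1 of the paper is x here):  p x y  means  x > y. *)
Definition pop (k : nat) := rel 'I_k.

Definition contains_pop (k n : nat) (p : pop k) (s : {perm 'I_n}) : bool :=
  [exists f : {ffun 'I_k -> 'I_n},
     [forall x : 'I_k, forall y : 'I_k, (x < y)%N ==> (f x < f y)%N]
     && [forall x : 'I_k, forall y : 'I_k, p x y ==> (s (f y) < s (f x))%N]].

Definition avoids_pop (k n : nat) (p : pop k) (s : {perm 'I_n}) : bool :=
  ~~ contains_pop p s.

Definition num_avoiders (k : nat) (p : pop k) (n : nat) : nat :=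
  #|[set s : {perm 'I_n} | avoids_pop p s]|.

Definition pop_1gt2 : pop 4 := fun x y => (val x == 0%N) && (val y == 1%N).

From HB Require Import structures.
From mathcomp Require Import all_boot all_order all_algebra all_fingroup.
From mathcomp Require Import zify.
Import GRing.Theory Num.Theory.

Set Implicit Arguments.
Unset Strict Implicit.
Unset Printing Implicit Defensive.

(* An occurrence of the POP 1>2 (labels 3, 4 free) in an n-permutation s is
   just an inversion s(i) > s(j), i < j, whose larger position j leaves room for
   two further positions, i.e. j < n-2.  Hence s avoids the POP iff s is
   increasing on its first m := n-2 positions.
   Such "prefix-increasing" permutations are studied for an arbitrary prefix
   length m <= n: the first m values are forced to be the complement of the
   last n-m values listed in increasing order, so the map sending s to its
   tail (the injection 'I_(n-m) -> 'I_n of its last n-m values) is a bijection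
   onto all injections, and there are n ^_ (n-m) (falling factorial) of them.
   With m = n-2 this gives a(n) = n ^_ (n - (n-2)), i.e. n! for n <= 3 and
   n(n-1) for n >= 2; the generating-function identity is then a finite check
   for n <= 4 and, for n >= 5, the vanishing third difference of a quadratic. *)

Section PrefixIncreasing.
Variables n m : nat.
Hypothesis m_le_n : (m <= n)%N.

Definition prefix_increasing (s : {perm 'I_n}) : bool :=
  [forall i : 'I_n, forall j : 'I_n, ((i < j) && (j < m))%N ==> (s i < s j)%N].

Definition head_pos (i : 'I_m) : 'I_n := widen_ord m_le_n i.

Lemma tail_pos_subproof (i : 'I_(n - m)) : (m + i < n)%N.
Proof. by rewrite -ltn_subRL. Qed.

Definition tail_pos (i : 'I_(n - m)) : 'I_n := Ordinal (tail_pos_subproof i).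

Definition tail (s : {perm 'I_n}) : {ffun 'I_(n - m) -> 'I_n} :=
  [ffun i => s (tail_pos i)].

Definition head_vals (s : {perm 'I_n}) : seq 'I_n :=
  [seq s (head_pos i) | i <- enum 'I_m].

Lemma split_pos (k : 'I_n) :
  (exists i, k = head_pos i) \/ (exists i, k = tail_pos i).
Proof.
have [km | mk] := ltnP k m; [left | right].
  by exists (Ordinal km); apply: val_inj.
have kmn : (k - m < n - m)%N by rewrite ltn_sub2r // (leq_ltn_trans mk).
by exists (Ordinal kmn); apply: val_inj; rewrite /= subnKC.
Qed.

Lemma head_tail_neq (i : 'I_m) (j : 'I_(n - m)) : head_pos i != tail_pos j.
Proof. by rewrite -val_eqE /= neq_ltn (leq_trans (ltn_ord i)) ?leq_addr. Qed.

Lemma mem_head_vals s v : (v \in head_vals s) = (v \notin codom (tail s)).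
Proof.
have [k ->] : exists k, v = s k by exists ((s^-1)%g v); rewrite permKV.
have [[i ->] | [i ->]] := split_pos k.
  rewrite (map_f _ (mem_enum _ i)); apply/esym/codomP => -[j].
  by rewrite ffunE => /perm_inj eij; move: (head_tail_neq i j); rewrite eij eqxx.
have -> : s (tail_pos i) \in codom (tail s) by apply/codomP; exists i; rewrite ffunE.
apply/mapP => -[j _ /perm_inj eji].
by move: (head_tail_neq j i); rewrite eji eqxx.
Qed.

Lemma head_vals_sorted s :
  prefix_increasing s -> sorted (relpre val ltn) (head_vals s).
Proof.
move=> inc; apply: (homo_sorted (e := relpre val ltn)).
  by move=> i j ij; apply: (implyP (forallP (forallP inc _) _)); rewrite /= ltn_ord andbT.
by rewrite -sorted_map val_enum_ord iota_ltn_sorted.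
Qed.

(* A prefix-increasing permutation is determined by its tail: its head values
   are the increasingly sorted complement of the tail values. *)
Lemma prefix_increasing_inj s t : prefix_increasing s -> prefix_increasing t ->
  tail s = tail t -> s = t.
Proof.
move=> incs inct eq_tail.
have eq_head : head_vals s = head_vals t.
  apply: (irr_sorted_eq _ _ (head_vals_sorted incs) (head_vals_sorted inct)).
  - by move=> ? ? ?; apply: ltn_trans.
  - by move=> ?; apply: ltnn.
  - by move=> v; rewrite !mem_head_vals eq_tail.
apply/permP => k; have [[i ->] | [i ->]] := split_pos k.
  by move/eq_in_map: eq_head; apply; rewrite mem_enum.
by have := congr1 (fun f : {ffun _ -> _} => f i) eq_tail; rewrite !ffunE.
Qed.

(* Conversely every injective tail f occurs: list the values outside the image
   of f increasingly, followed by f 0, ..., f (n-m-1). *)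
Lemma prefix_increasing_surj (f : {ffun 'I_(n - m) -> 'I_n}) :
  injectiveb f -> exists2 s, prefix_increasing s & tail s = f.
Proof.
move=> injf.
set F := [seq v <- enum 'I_n | v \notin codom f].
set L := F ++ codom f.
have uniqL : uniq L.
  rewrite cat_uniq filter_uniq ?enum_uniq // codomE [uniq _]injf andbT.
  by apply/hasPn => v fv; rewrite mem_filter codomE fv.
have sizeL : size L = n.
  have memL : L =i enum 'I_n.
    by move=> v; rewrite mem_cat mem_filter mem_enum; case: (v \in codom f).
  by rewrite (perm_size (uniq_perm uniqL (enum_uniq _) memL)) size_enum_ord.
have sizeF : size F = m by move: sizeL; rewrite size_cat size_codom card_ord; lia.
have sortedF : sorted (relpre val ltn) F.
  apply: sorted_filter; first by move=> ? ? ?; apply: ltn_trans.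
  by rewrite -sorted_map val_enum_ord iota_ltn_sorted.
have nthL_inj : injective (fun k : 'I_n => nth k L k).
  move=> i j; rewrite [nth j L j](set_nth_default i) ?sizeL // => /eqP.
  by rewrite nth_uniq ?sizeL // => /eqP /val_inj.
exists (perm nthL_inj).
  apply/forallP => i; apply/forallP => j; apply/implyP => /andP [ij jm].
  rewrite !permE /L !nth_cat sizeF jm (ltn_trans ij jm).
  rewrite [nth j F j](set_nth_default i) ?sizeF //.
  apply: (sorted_ltn_nth _ _ sortedF) => //; first by move=> ? ? ?; apply: ltn_trans.
    by rewrite inE sizeF (ltn_trans ij jm).
  by rewrite inE sizeF.
apply/ffunP => i; rewrite !ffunE permE /L nth_cat sizeF /= ltnNge leq_addr /= addKn.
have i_lt : (i < size (enum 'I_(n - m)))%N by rewrite -cardE card_ord.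
by rewrite codomE (nth_map i) // nth_ord_enum.
Qed.

Lemma card_prefix_increasing :
  #|[set s : {perm 'I_n} | prefix_increasing s]| = n ^_ (n - m).
Proof.
have := card_inj_ffuns 'I_(n - m) 'I_n; rewrite !card_ord => <-.
rewrite -(card_in_imset (f := tail)); last first.
  by move=> s t; rewrite !inE; apply: prefix_increasing_inj.
apply: eq_card => f; rewrite inE; apply/imsetP/idP.
  case=> s _ ->; apply/injectiveP => i j.
  by rewrite !ffunE => /perm_inj /(congr1 val) /addnI /val_inj.
by case/prefix_increasing_surj => s inc <-; exists s; rewrite ?inE.
Qed.

End PrefixIncreasing.

Definition label (k : nat) (hk : (k < 4)%N) : 'I_4 := Ordinal hk.

(* s contains the POP 1>2 of length 4 iff it has an inversion whose second
   position j satisfies j < n-2: an occurrence yields the inversion at its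
   first two positions, and an inversion extends by the positions n-2, n-1. *)
Lemma contains_1gt2P n (s : {perm 'I_n}) :
  reflect (exists i j : 'I_n, [/\ i < j, j < n - 2 & s j < s i]%N)
          (contains_pop pop_1gt2 s).
Proof.
apply: (iffP existsP) => [[f /andP [incr rel]] | [i [j [ij jn sji]]]].
  have step (x y : 'I_4) : (x < y)%N -> (f x < f y)%N :=
    implyP (forallP (forallP incr x) y).
  have f12 := step (label (isT : 1 < 4)%N) (label (isT : 2 < 4)%N) isT.
  have f23 := step (label (isT : 2 < 4)%N) (label (isT : 3 < 4)%N) isT.
  exists (f (label (isT : 0 < 4)%N)), (f (label (isT : 1 < 4)%N)); split.
  - exact: step.
  - by have := ltn_ord (f (label (isT : 3 < 4)%N)); lia.
  - exact: (implyP (forallP (forallP rel _) _)).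
have n2 : (n - 2 < n)%N by lia.
have n1 : (n.-1 < n)%N by lia.
exists [ffun x : 'I_4 => nth i [:: i; j; Ordinal n2; Ordinal n1] x]; apply/andP; split.
  apply/'forall_forallP => -[[|[|[|[|x]]]] hx] // [[|[|[|[|y]]]] hy] //;
    apply/implyP => /= xy; rewrite !ffunE /=; have := ltn_ord i; lia.
apply/'forall_forallP => x y; apply/implyP => /andP [/eqP x0 /eqP y1].
by rewrite !ffunE x0 y1.
Qed.

Lemma avoids_1gt2 n (s : {perm 'I_n}) :
  avoids_pop pop_1gt2 s = prefix_increasing (n - 2) s.
Proof.
apply/idP/idP => [avoid | inc].
  apply/'forall_forallP => i j; apply/implyP => /andP [ij jn].
  rewrite ltn_neqAle leqNgt; apply/andP; split.
    by apply: contraTneq ij => /val_inj /perm_inj ->; rewrite ltnn.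
  by apply: contra avoid => sji; apply/contains_1gt2P; exists i, j.
apply/contains_1gt2P => -[i [j [ij jn sji]]].
by move: (implyP (forallP (forallP inc i) j)); rewrite ij jn ltnNge (ltnW sji) => /(_ isT).
Qed.

(* a(n) = n ^_ min(n, 2). *)
Lemma num_avoiders_1gt2 n : num_avoiders pop_1gt2 n = n ^_ (n - (n - 2)).
Proof.
rewrite /num_avoiders -(card_prefix_increasing (leq_subr 2 n)).
by apply: eq_card => s; rewrite !inE avoids_1gt2.
Qed.

Lemma num_avoiders_1gt2_quadratic n : (2 <= n)%N -> num_avoiders pop_1gt2 n = n * n.-1.
Proof.
move=> n2; rewrite num_avoiders_1gt2 (_ : n - (n - 2) = 2); last by lia.
by rewrite ffactnS ffactn1.
Qed.

Theorem theorem3p1 :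
  let a := num_avoiders pop_1gt2 in
  (forall n : nat, (n <= 3)%N -> a n = n`!) /\
  (forall n : nat, (4 <= n)%N -> a n = n * n.-1) /\
  (forall n : nat,
     (\sum_(k < (minn n 3).+1) (-1) ^+ k * ('C(3, k))%:Z * (a (n - k)%N)%:Z
      = nth 0 [:: 1; -2; 2; 2; -1] n)%R).
Proof.
move=> a; split; [|split].
- by move=> n; rewrite /a num_avoiders_1gt2; case: n => [|[|[|[|]]]].
- by move=> n n4; apply: num_avoiders_1gt2_quadratic; lia.
case=> [|[|[|[|[|k]]]]]; try by rewrite !big_ord_recr big_ord0 /= /a !num_avoiders_1gt2.
(* For n >= 5 the left side is the third difference of n(n-1), which is 0. *)
rewrite (_ : minn k.+4.+1 3 = 3) // !big_ord_recr big_ord0 /= /a.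
rewrite !num_avoiders_1gt2_quadratic //.
have -> : 'C(3, 1) = 3 by []. have -> : 'C(3, 2) = 3 by [].
rewrite bin0 binn nth_nil !exprS !expr0; lia.
Qed.
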